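(* Let $G$ be a graph with $n$ vertices that is $p$-almost equitably $k$-colorable, where $k \le n$. Then there exists a set $X$ of exactly $\min\{p, n-k\}$ vertices such that $G \setminus X$ has an equitable $k$-coloring.
   Context: A $k$-coloring of a graph is equitable if it partitions the vertex set into $k$ stable sets (color classes) whose sizes pairwise differ by at most one. A graph $G$ is $p$-almost equitably $k$-colorable if there exists a set $X$ of at most $p$ vertices such that $G\setminus X$ has an equitable $k$-coloring. *)

From mathcomp Require Import all_boot.
Set Implicit Arguments. Unset Strict Implicit. Unset Printing Implicit Defensive.

(* A simple graph on a finite vertex type T is a symmetric irreflexive
   relation e : rel T.  G \ X is the induced subgraph on the vertex set ~: X. *)

Definition equitable_coloring (T : finType) (e : rel T) (S : {set T})
    (k : nat) (c : T -> nat) : Prop :=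
  [/\ (forall x, x \in S -> c x < k),
      (forall x y, x \in S -> y \in S -> e x y -> c x != c y) &
      (forall i j, i < k -> j < k ->
         #|[set x in S | c x == i]| <= #|[set x in S | c x == j]| + 1)].

Definition equitably_colorable (T : finType) (e : rel T) (S : {set T})
    (k : nat) : Prop :=
  exists c : T -> nat, equitable_coloring e S k c.

Definition almost_equitably_colorable (T : finType) (e : rel T)
    (p k : nat) : Prop :=
  exists X : {set T}, #|X| <= p /\ equitably_colorable e (~: X) k.

From mathcomp Require Import all_boot.
Set Warnings "-notation-overridden".
From mathcomp Require Import zify.
Set Implicit Arguments. Unset Strict Implicit. Unset Printing Implicit Defensive.

(* An equitable k-coloring of a vertex set S can be transported to a vertex
   set of any size m between |S| and max(|S|, k).  Going down, delete a vertex
   from a largest colour class.  Going up is only needed while |S| < k; then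
   some colour is unused, so every class has at most one vertex, and a new
   vertex can be given the unused colour.  With |X| <= p, the target size
   n - min(p, n - k) = max(n - p, k) of the complement of X is in this range. *)

Local Notation color_class S c i := [set x in S | c x == i].

Section EquitableColoring.

Variables (T : finType) (e : rel T) (k : nat).

Lemma card_color_class_setD1 (S : {set T}) (c : T -> nat) y i : y \in S ->
  #|color_class (S :\ y) c i| = #|color_class S c i| - (c y == i).
Proof.
move=> yS; have -> : color_class (S :\ y) c i = color_class S c i :\ y.
  by apply/setP=> z; rewrite !inE andbA.
by rewrite [in RHS](cardsD1 y) !inE yS /= addKn.
Qed.

Lemma equitable_coloring_setD1 (S : {set T}) c x0 : x0 \in S ->
  equitable_coloring e S k c ->
  exists2 x, x \in S & equitable_coloring e (S :\ x) k c.
Proof.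
move=> x0S [c_lt c_stable c_bal].
have k_gt0 : 0 < k by apply: leq_ltn_trans (c_lt _ x0S).
pose size_of (i : nat) := #|color_class S c i|.
pose i : 'I_k := [arg max_(i > Ordinal k_gt0) size_of i].
have i_max (j : 'I_k) : size_of j <= size_of i.
  by rewrite /i; case: arg_maxnP => // ? _; apply.
have : 0 < size_of i.
  apply: leq_trans (i_max (Ordinal (c_lt _ x0S))).
  by rewrite card_gt0; apply/set0Pn; exists x0; rewrite inE x0S /=.
rewrite card_gt0 => /set0Pn [x]; rewrite inE => /andP [xS /eqP cx].
exists x => //; split.
- by move=> y /setD1P [_ /c_lt].
- by move=> y z /setD1P [_ yS] /setD1P [_ zS]; apply: c_stable.
move=> a b a_lt b_lt; rewrite !card_color_class_setD1 // cx.
have := c_bal a b a_lt b_lt; have := i_max (Ordinal a_lt).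
have := i_max (Ordinal b_lt); rewrite /size_of /=.
by case: eqP => [<-|_]; case: eqP => [<-|_]; lia.
Qed.

Lemma unused_color (S : {set T}) (c : T -> nat) : #|S| < k ->
  exists2 i, i < k & forall x, x \in S -> c x != i.
Proof.
move=> S_lt; have [all_used | /allPn [i]] := boolP (all [in image c S] (iota 0 k)).
  have := uniq_leq_size (iota_uniq 0 k) (allP all_used).
  by rewrite size_iota size_image leqNgt S_lt.
rewrite mem_iota add0n => i_lt /= i_unused; exists i => // x xS.
by apply: contraNneq i_unused => <-; apply: image_f.
Qed.

Lemma equitable_coloring_injective (S : {set T}) c : #|S| < k ->
  equitable_coloring e S k c -> {in S &, injective c}.
Proof.
move=> S_lt [c_lt _ c_bal] x y xS yS cxy; apply/eqP; apply: contraT => xy.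
have [i i_lt i_unused] := unused_color c S_lt.
have : #|color_class S c i| = 0.
  by apply/eqP; rewrite cards_eq0; apply/eqP/setP=> z; rewrite !inE;
    apply/negP=> /andP [/i_unused/negP].
move: (c_bal _ _ (c_lt _ xS) i_lt) => /[swap] ->.
have : [set x; y] \subset color_class S c (c x).
  by apply/subsetP=> z; rewrite !inE => /orP [] /eqP ->; rewrite ?xS ?yS cxy eqxx.
by move/subset_leq_card; rewrite cards2 xy; lia.
Qed.

Lemma injective_equitable_coloring (S : {set T}) c : irreflexive e ->
  (forall x, x \in S -> c x < k) -> {in S &, injective c} ->
  equitable_coloring e S k c.
Proof.
move=> irr c_lt c_inj; split=> // [x y xS yS|i j _ _].
  by apply: contraTneq => /c_inj ->; rewrite ?irr.
apply: leq_trans (leq_addl _ _); apply/card_le1_eqP => x y.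
by rewrite !inE => /andP [xS /eqP <-] /andP [yS /eqP /c_inj ->].
Qed.

Lemma equitable_coloring_setU1 (S : {set T}) c x : irreflexive e ->
  #|S| < k -> x \notin S -> equitable_coloring e S k c ->
  exists c', equitable_coloring e (x |: S) k c'.
Proof.
move=> irr S_lt xS c_eq; have [c_lt _ _] := c_eq.
have c_inj := equitable_coloring_injective S_lt c_eq.
have [i i_lt i_unused] := unused_color c S_lt.
exists (fun y => if y == x then i else c y).
apply: injective_equitable_coloring => // [y|y z].
  by case: eqP => // _ /setU1P [//|/c_lt].
move=> /setU1P [->|yS] /setU1P [->|zS]; rewrite ?eqxx //.
- by rewrite (negbTE (memPn xS z zS)) => /eqP; rewrite eq_sym (negbTE (i_unused _ zS)).
- by rewrite (negbTE (memPn xS y yS)) => /eqP; rewrite (negbTE (i_unused _ yS)).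
by rewrite (negbTE (memPn xS y yS)) (negbTE (memPn xS z zS)); apply: c_inj.
Qed.

Lemma equitably_colorable_shrink (S : {set T}) m : m <= #|S| ->
  equitably_colorable e S k ->
  exists S' : {set T}, #|S'| = m /\ equitably_colorable e S' k.
Proof.
move=> /subnK; move: (#|S| - m) => d; elim: d S => [|d IH] S S_card [c c_eq].
  by exists S; split=> //; exists c.
have [x0 x0S] : exists x0, x0 \in S by apply/set0Pn; rewrite -card_gt0 -S_card addSn.
have [x xS cx_eq] := equitable_coloring_setD1 x0S c_eq.
apply: (IH (S :\ x)); last by exists c.
by apply/succn_inj; rewrite -addSn S_card (cardsD1 x S) xS.
Qed.

Lemma equitably_colorable_grow (S : {set T}) m : irreflexive e ->
  #|S| <= m -> m <= minn k #|T| -> equitably_colorable e S k ->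
  exists S' : {set T}, #|S'| = m /\ equitably_colorable e S' k.
Proof.
move=> irr /subnK; move: (m - #|S|) => d; elim: d S => [|d IH] S S_card m_le [c c_eq].
  by exists S; split=> //; exists c.
have [x xS] : exists x, x \notin S.
  have : 0 < #|~: S| by rewrite cardsCs setCK; lia.
  by rewrite card_gt0 => /set0Pn [x]; rewrite inE; exists x.
have [|c' c'_eq] := equitable_coloring_setU1 irr _ xS c_eq; first by lia.
by apply: (IH (x |: S)) => //; [rewrite cardsU1 xS; lia | exists c'].
Qed.

End EquitableColoring.

Theorem claim1 (T : finType) (e : rel T) (p k : nat) :
  symmetric e -> irreflexive e ->
  k <= #|T| ->
  almost_equitably_colorable e p k ->
  exists X : {set T}, #|X| = minn p (#|T| - k) /\ equitably_colorable e (~: X) k.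
Proof.
move=> _ irr k_le [X [X_le colX]].
pose m := #|T| - minn p (#|T| - k).
suff [S [S_card colS]] : exists S : {set T}, #|S| = m /\ equitably_colorable e S k.
  by exists (~: S); rewrite setCK; split=> //; have := cardsC S; lia.
have X_card := cardsC X.
have [m_le | m_gt] := leqP m #|~: X|.
  exact: equitably_colorable_shrink m_le colX.
by apply: equitably_colorable_grow irr (ltnW m_gt) _ colX; lia.
Qed.
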